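(* Let $q$ be a prime, $r\geq 2$ and $k\geq 4$, and let $(f_1,f_2,\dots,f_r)$ be an $r$-tuple of Latin hypercubes of order $q$ and dimension $k$ (not necessarily mutually orthogonal). Suppose that for every two distinct indices $i,j\in[r]$ and every way of fixing the same $k-3$ of the $k$ arguments to the same values in both $f_i$ and $f_j$, the resulting pair of Latin hypercubes of dimension $3$ is a linear pair. Then $(f_1,f_2,\dots,f_r)$ is a linear $r$-tuple of Latin hypercubes.
   Context: $[m]=\{1,\dots,m\}$. A Latin hypercube of order $q$ and dimension $k$ is a function $f:\mathbb{F}_q^k\to\mathbb{F}_q$ such that, whenever any $k-1$ of the arguments are fixed, the resulting function of the remaining argument is a bijection of $\mathbb{F}_q$ (equivalently, every $q\times q$ subarray obtained by fixing $k-2$ arguments is a Latin square). Fixing some arguments of a Latin hypercube to constants yields a Latin hypercube of smaller dimension in the remaining arguments. An $r$-tuple $(f_1,\dots,f_r)$ of Latin hypercubes of order $q$ and dimension $k$ is linear if there exist permutations $\alpha_1,\dots,\alpha_k,\beta_1,\dots,\beta_r$ of $\mathbb{F}_q$ and coefficients $a_{i,j}\in\mathbb{F}_q$ ($i\in[r]$, $j\in[k]$) such that for every $i\in[r]$ and all $x\in\mathbb{F}_q^k$, $\beta_i(f_i(x_1,\dots,x_k))=a_{i,1}\alpha_1(x_1)+\cdots+a_{i,k}\alpha_k(x_k)$. A linear pair is a linear $2$-tuple. *)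

From HB Require Import structures.
From mathcomp Require Import all_boot all_order all_algebra all_fingroup.
Set Implicit Arguments. Unset Strict Implicit. Unset Printing Implicit Defensive.
Import GRing.Theory.
Local Open Scope ring_scope.

Definition hyper (F : finFieldType) (k : nat) := {ffun 'I_k -> F} -> F.

Definition upd (F : finFieldType) (k : nat) (x : {ffun 'I_k -> F}) (j : 'I_k) (a : F)
  : {ffun 'I_k -> F} := [ffun i => if i == j then a else x i].

Definition latin_hypercube (F : finFieldType) (k : nat) (f : hyper F k) : Prop :=
  forall (x : {ffun 'I_k -> F}) (j : 'I_k), bijective (fun a : F => f (upd x j a)).

Definition linear_tuple (F : finFieldType) (r k : nat) (f : 'I_r -> hyper F k) : Prop :=
  exists (alpha : 'I_k -> {perm F}) (beta : 'I_r -> {perm F}) (a : 'I_r -> 'I_k -> F),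
    forall (i : 'I_r) (x : {ffun 'I_k -> F}),
      beta i (f i x) = \sum_(j < k) a i j * alpha j (x j).

Definition linear_pair (F : finFieldType) (k : nat) (g h : hyper F k) : Prop :=
  linear_tuple (fun t : 'I_2 => if val t == 0%N then g else h).

(* Restriction of f: the arguments outside the image of e are fixed to the
   values of x; the m free arguments, in the order given by e, are the new ones. *)
Definition restrict (F : finFieldType) (k m : nat) (f : hyper F k)
  (e : 'I_m -> 'I_k) (x : {ffun 'I_k -> F}) : hyper F m :=
  fun y => f [ffun i => if [pick t | e t == i] is Some t then y t else x i].

From HB Require Import structures.
From mathcomp Require Import all_boot all_order all_algebra all_fingroup.
From mathcomp Require Import ring.
Set Implicit Arguments. Unset Strict Implicit. Unset Printing Implicit Defensive.
Import GRing.Theory.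
Local Open Scope ring_scope.

(* On every 3-dimensional face the hypothesis gives a permutation beta with
   beta o f_i = A_j(x_j) + A_l(x_l) + A_m(x_m).  Call a permutation B separable
   for g at (x; j, l) when B o g satisfies the rectangle identity in directions
   j, l at x.  If B is separable in two directions of a face, then B o beta^-1
   satisfies Jensen's equation (the A's are bijections since g is Latin), and
   over a prime field additive maps are linear, so B is affine in beta.  Being
   affine in beta, B is separable everywhere on that face; moving from face to
   face, separability at one point in one pair of directions spreads to all
   points and all pairs.  Hence, normalising B_i (f_i 0) = 0, each B_i o f_i is
   the sum of the one-variable functions phi_ij t = B_i (f_i (0[j := t])).
   Finally f_i and f_i0 form a linear pair on a common face, with the same
   functions A, so phi_ij and phi_i0j are both affine in A_j and hence
   proportional; alpha_j := phi_i0j then makes (f_i) a linear tuple. *)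

Definition additive_maps_linear (F : fieldType) :=
  forall P : F -> F, {morph P : s t / s + t} -> forall w, P w = w * P 1.

Lemma Fp_additive_maps_linear p : prime p -> additive_maps_linear 'F_p.
Proof.
move=> p_prime P P_add w.
have P0 : P 0 = 0 by apply: (addrI (P 0)); rewrite -P_add !addr0.
have Pn n : P n%:R = n%:R * P 1.
  elim: n => [|n IHn]; first by rewrite P0 mul0r.
  by rewrite -[n.+1]addn1 natrD P_add IHn mulrDl mul1r.
have -> : w = (val w)%:R.
  by apply/val_inj; rewrite /= val_Fp_nat // modn_small // -{2}(Fp_cast p_prime).
exact: Pn.
Qed.

Lemma exists_notin n (s : seq 'I_n) : (size s < n)%N -> exists m : 'I_n, m \notin s.
Proof.
move=> lt_s_n; apply/existsP; apply: contraLR lt_s_n.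
rewrite negb_exists -leqNgt => /forallP s_full.
rewrite -{1}(card_ord n); apply: leq_trans (card_size s); apply: subset_leq_card.
by apply/subsetP => m _; have := s_full m; rewrite negbK.
Qed.

Lemma increasing_codom_perm k (x0 : 'I_k) (s : seq 'I_k) : uniq s ->
  exists e : 'I_(size s) -> 'I_k, {homo e : a b / (a < b)%N} /\ perm_eq (codom e) s.
Proof.
move=> s_uniq; pose t := sort (fun a b : 'I_k => (a <= b)%N) s.
have t_perm : perm_eq t s by exact/permEl/perm_sort.
have t_size : size t = size s := perm_size t_perm.
have t_lt : sorted ltn (map val t).
  rewrite ltn_sorted_uniq_leq (map_inj_uniq val_inj) (perm_uniq t_perm) s_uniq.
  by rewrite sorted_map; apply: sort_sorted => a b; exact: leq_total.
exists (fun a => nth x0 t a); split.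
  move=> a b ab; rewrite -!(nth_map x0 0) ?t_size //.
  by apply: (sorted_ltn_nth ltn_trans) => //; rewrite inE size_map t_size.
by rewrite codomE (map_comp (nth x0 t) val) val_enum_ord -t_size -/(mkseq _ _) mkseq_nth.
Qed.

Lemma uniq3 (T : eqType) (j l m : T) : uniq [:: j; l; m] = [&& j != l, j != m & l != m].
Proof. by rewrite /= !inE negb_or andbT andbA. Qed.

Lemma exists_uniq3 n (j : 'I_n) : (2 < n)%N -> exists l m, uniq [:: j; l; m].
Proof.
move=> two_lt_n; have [l] := exists_notin (s := [:: j]) (ltnW two_lt_n).
have [m] := exists_notin (s := [:: j; l]) two_lt_n.
rewrite !inE negb_or => /andP[mj ml] lj.
by exists l, m; rewrite uniq3 eq_sym lj eq_sym mj eq_sym ml.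
Qed.

Section Updates.
Variables (F : finFieldType) (k : nat).
Implicit Types (x y : {ffun 'I_k -> F}) (j l : 'I_k).

Lemma updE x j a i : upd x j a i = if i == j then a else x i.
Proof. by rewrite ffunE. Qed.

Lemma upd_idE x j a : x j = a -> upd x j a = x.
Proof. by move=> <-; apply/ffunP => i; rewrite updE; case: eqP => [->|]. Qed.

Lemma upd_upd x j a b : upd (upd x j a) j b = upd x j b.
Proof. by apply/ffunP => i; rewrite !updE; case: eqP. Qed.

Lemma upd_updC x j l a b : j != l -> upd (upd x j a) l b = upd (upd x l b) j a.
Proof.
move=> jl; apply/ffunP => i; rewrite !updE.
by case: (eqVneq i l) => [->|//]; rewrite eq_sym (negbTE jl).
Qed.

Lemma upd_ind y (P : {ffun 'I_k -> F} -> Prop) :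
  P y -> (forall x j a, P x -> P (upd x j a)) -> forall x, P x.
Proof.
move=> Py Pupd x.
pose z n := [ffun i : 'I_k => if (i < n)%N then x i else y i].
have -> : x = z k by apply/ffunP => i; rewrite ffunE ltn_ord.
suff: forall n, (n <= k)%N -> P (z n) by apply.
elim=> [|n IHn] lt_n_k.
  by have -> : z 0%N = y by apply/ffunP => i; rewrite ffunE.
have -> : z n.+1 = upd (z n) (Ordinal lt_n_k) (x (Ordinal lt_n_k)).
  apply/ffunP => i; rewrite !ffunE ltnS leq_eqVlt -val_eqE /=.
  by case: eqP => [i_n|//]; congr (x _); exact: val_inj.
by apply: Pupd; apply: IHn; exact: ltnW.
Qed.

End Updates.

Section Faces.
Variables (F : finFieldType) (k : nat).
Implicit Types (x y z : {ffun 'I_k -> F}) (d : seq 'I_k) (g : hyper F k).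

Definition on_face x d z := forall i, i \notin d -> z i = x i.

Definition face_form (be : F -> F) g x d (A : 'I_k -> F -> F) :=
  forall z, on_face x d z -> be (g z) = \sum_(p <- d) A p (z p).

Definition face_additive g := forall x (j l m : 'I_k), uniq [:: j; l; m] ->
  exists (be : {perm F}) (A : 'I_k -> F -> F), face_form be g x [:: j; l; m] A.

Definition separable_at (B : F -> F) g x (j l : 'I_k) := forall u v,
  B (g (upd (upd x j u) l v)) + B (g x) = B (g (upd x j u)) + B (g (upd x l v)).

Lemma on_face_refl x d : on_face x d x.
Proof. by []. Qed.

Lemma on_face_upd x d z p a : on_face x d z -> p \in d -> on_face x d (upd z p a).
Proof.
move=> xz pd i i_d; rewrite updE; case: eqVneq => [ip|_]; last exact: xz.
by move: i_d; rewrite ip pd.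
Qed.

Lemma face_form_perm be g x d d' A :
  perm_eq d d' -> face_form be g x d A -> face_form be g x d' A.
Proof.
move=> dd' beg z xz; rewrite -(perm_big _ dd'); apply: beg => i.
by rewrite (perm_mem dd'); exact: xz.
Qed.

Lemma face_sum3 (A : 'I_k -> F -> F) z (j l m : 'I_k) :
  \sum_(p <- [:: j; l; m]) A p (z p) = A j (z j) + A l (z l) + A m (z m).
Proof. by rewrite !big_cons big_nil addr0 addrA. Qed.

Lemma upd2_coord (h : F -> F) x (p s : 'I_k) u v i : p != s ->
  h (upd (upd x p u) s v i) + h (x i) = h (upd x p u i) + h (upd x s v i).
Proof.
move=> ps; rewrite !updE; case: (eqVneq i s) => [->|//].
by rewrite eq_sym (negbTE ps) addrC.
Qed.

Lemma separable_of_face_form B g x d (H : 'I_k -> F -> F) c x' p s :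
  (forall z, on_face x d z -> B (g z) = c + \sum_(q <- d) H q (z q)) ->
  on_face x d x' -> p \in d -> s \in d -> p != s -> separable_at B g x' p s.
Proof.
move=> Bg xx' pd sd ps u v.
have xu := on_face_upd u xx' pd; have xv := on_face_upd v xx' sd.
rewrite (Bg _ (on_face_upd v xu sd)) (Bg _ xx') (Bg _ xu) (Bg _ xv).
rewrite addrACA [RHS]addrACA -!big_split; congr (_ + _).
by apply: eq_bigr => q _; exact: upd2_coord.
Qed.

End Faces.

Arguments on_face_refl {F k x d}.

Section Separable.
Variables (F : finFieldType) (k : nat).
Hypothesis F_additive_linear : additive_maps_linear F.
Implicit Types (x y z : {ffun 'I_k -> F}) (g : hyper F k).

Lemma affine_of_midpoint (psi : F -> F) w0 :
  (forall s t, psi (s + t + w0) + psi w0 = psi (s + w0) + psi (t + w0)) ->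
  exists c d, forall w, psi w = c * w + d.
Proof.
move=> mid; pose P w := psi (w + w0) - psi w0.
have P_add : {morph P : s t / s + t}.
  by move=> s t; rewrite /P -[psi (s + t + w0)](addrK (psi w0)) mid; ring.
exists (P 1), (psi w0 - w0 * P 1) => w.
have := F_additive_linear P_add (w - w0); rewrite {1}/P subrK => Pw.
by rewrite -(subrK (psi w0) (psi w)) Pw; ring.
Qed.

Lemma separable_affine B g x (j l m : 'I_k) (be : {perm F}) A :
  latin_hypercube g -> uniq [:: j; l; m] -> separable_at B g x j l ->
  face_form be g x [:: j; l; m] A -> exists c d, forall w, B w = c * be w + d.
Proof.
move=> g_latin; rewrite uniq3 => /and3P[jl jm lm] Bsep beg.
have form u v : be (g (upd (upd x j u) l v)) = A j u + A l v + A m (x m).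
  have xuv : on_face x [:: j; l; m] (upd (upd x j u) l v).
    by apply: on_face_upd (on_face_upd _ on_face_refl _) _; rewrite !inE eqxx ?orbT.
  rewrite beg // face_sum3 /= !updE !eqxx (negbTE jl) [m == l]eq_sym (negbTE lm).
  by rewrite [m == j]eq_sym (negbTE jm).
have form_j u : be (g (upd x j u)) = A j u + A l (x l) + A m (x m).
  by rewrite -form [upd _ l _]upd_idE // updE eq_sym (negbTE jl).
have form_l v : be (g (upd x l v)) = A j (x j) + A l v + A m (x m).
  by rewrite -form [upd x j _]upd_idE.
have form_x : be (g x) = A j (x j) + A l (x l) + A m (x m).
  by rewrite -form_j upd_idE.
have Aj_inj : injective (A j).
  move=> u1 u2 eqA; apply: (bij_inj (g_latin x j)); apply: (@perm_inj _ be).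
  by rewrite /= !form_j eqA.
have Al_inj : injective (A l).
  move=> v1 v2 eqA; apply: (bij_inj (g_latin x l)); apply: (@perm_inj _ be).
  by rewrite /= !form_l eqA.
have [Aj' _ AjK] := injF_bij Aj_inj; have [Al' _ AlK] := injF_bij Al_inj.
have [c [d psiE]] : exists c d, forall w, B ((be^-1)%g w) = c * w + d.
  apply: (affine_of_midpoint (w0 := be (g x))) => s t.
  pose u := Aj' (s + A j (x j)); pose v := Al' (t + A l (x l)).
  have -> : s + t + be (g x) = be (g (upd (upd x j u) l v)).
    by rewrite form /u /v AjK AlK form_x; ring.
  have -> : s + be (g x) = be (g (upd x j u)) by rewrite form_j /u AjK form_x; ring.
  have -> : t + be (g x) = be (g (upd x l v)) by rewrite form_l /v AlK form_x; ring.
  by rewrite !permK; exact: Bsep.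
by exists c, d => w; have := psiE (be w); rewrite permK.
Qed.

Lemma separable_axis_diff B g x (j l m : 'I_k) (be : {perm F}) A :
  latin_hypercube g -> uniq [:: j; l; m] -> separable_at B g x j l ->
  face_form be g x [:: j; l; m] A ->
  exists c, forall t, B (g (upd x j t)) - B (g x) = c * (A j t - A j (x j)).
Proof.
move=> g_latin jlm Bsep beg; have [c [d Bbe]] := separable_affine g_latin jlm Bsep beg.
exists c => t; move: jlm; rewrite uniq3 => /and3P[jl jm _].
have xt : on_face x [:: j; l; m] (upd x j t).
  by apply: on_face_upd on_face_refl _; rewrite inE eqxx.
rewrite !Bbe !beg ?face_sum3 //.
by rewrite !updE eqxx eq_sym (negbTE jl) eq_sym (negbTE jm); ring.
Qed.

Variable g : hyper F k.
Hypotheses (g_latin : latin_hypercube g) (g_face : face_additive g).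

Lemma separable_face B x (j l m : 'I_k) x' p s : uniq [:: j; l; m] ->
  separable_at B g x j l -> on_face x [:: j; l; m] x' ->
  p \in [:: j; l; m] -> s \in [:: j; l; m] -> p != s -> separable_at B g x' p s.
Proof.
move=> jlm Bsep; have [be [A beg]] := g_face x jlm.
have [c [d Bbe]] := separable_affine g_latin jlm Bsep beg.
apply: (separable_of_face_form (H := fun q a => c * A q a) (c := d)) => z xz.
by rewrite Bbe beg // big_distrr addrC.
Qed.

Lemma separable_sym B x (j l : 'I_k) :
  j != l -> separable_at B g x j l -> separable_at B g x l j.
Proof.
move=> jl Bsep u v; rewrite upd_updC; last by rewrite eq_sym.
by rewrite Bsep addrC.
Qed.

Lemma separable_retarget B x (a b c : 'I_k) :
  a != b -> c != a -> separable_at B g x a b -> separable_at B g x a c.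
Proof.
move=> ab ca Bsep; have [-> //|cb] := eqVneq c b.
apply: (separable_face (m := c) _ Bsep on_face_refl) => //.
- by rewrite uniq3 ab eq_sym ca eq_sym cb.
all: by rewrite ?inE ?eqxx ?orbT // eq_sym.
Qed.

Hypothesis two_lt_k : (2 < k)%N.

Lemma separable_pairs B x (a b : 'I_k) : a != b -> separable_at B g x a b ->
  forall p s, p != s -> separable_at B g x p s.
Proof.
move=> ab Bsep p s ps; have [pa | pa] := eqVneq p a.
  by rewrite pa; apply: separable_retarget ab _ Bsep; rewrite eq_sym -pa.
have Bap := separable_retarget ab pa Bsep.
by apply: (separable_retarget pa _ (separable_sym _ Bap)); rewrite eq_sym.
Qed.

Lemma separable_upd B x (a b n : 'I_k) t : a != b -> separable_at B g x a b ->
  separable_at B g (upd x n t) a b.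
Proof.
move=> ab Bsep.
have [m m_ab n_abm] : exists2 m, m \notin [:: a; b] & n \in [:: a; b; m].
  have [n_ab|n_ab] := boolP (n \in [:: a; b]); last by exists n; rewrite // !inE eqxx !orbT.
  have [m m_ab] := exists_notin (s := [:: a; b]) two_lt_k; exists m => //.
  by move: n_ab; rewrite !inE => /orP[] ->; rewrite ?orbT.
apply: (separable_face _ Bsep (on_face_upd t on_face_refl n_abm)) => //.
- by move: m_ab; rewrite uniq3 !inE negb_or ab => /andP[ma mb]; rewrite !(eq_sym _ m) ma mb.
- by rewrite !inE eqxx.
- by rewrite !inE eqxx ?orbT.
Qed.

Lemma separable_everywhere B y (a b : 'I_k) : a != b -> separable_at B g y a b ->
  forall x p s, p != s -> separable_at B g x p s.
Proof.
move=> ab Bsep x; apply: (separable_pairs ab); move: x.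
apply: (@upd_ind _ _ y (fun x => separable_at B g x a b) Bsep) => x n t.
exact: separable_upd ab.
Qed.

Lemma exists_separable_perm y : exists B : {perm F}, B (g y) = 0 /\
  forall x p s, p != s -> separable_at B g x p s.
Proof.
pose j : 'I_k := Ordinal (leq_ltn_trans (leq0n 2) two_lt_k).
have [l [m jlm]] := exists_uniq3 j two_lt_k.
have [be [A beg]] := g_face y jlm.
have shift_inj : injective (fun w => be w - be (g y)) by move=> w1 w2 /addIr/perm_inj.
exists (perm shift_inj); split; first by rewrite permE subrr.
move: jlm; rewrite uniq3 => /and3P[jl _ _]; apply: (separable_everywhere jl).
apply: (separable_of_face_form (x := y) (d := [:: j; l; m]) (H := A) (c := - be (g y)))
  on_face_refl _ _ jl => [z yz||].
- by rewrite permE beg // addrC.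
- by rewrite inE eqxx.
- by rewrite !inE eqxx ?orbT.
Qed.

End Separable.

Section Decomposition.
Variables (F : finFieldType) (k : nat) (B : F -> F) (g : hyper F k).
Hypothesis Bg_separable : forall x (p s : 'I_k), p != s -> separable_at B g x p s.

Lemma separable_diff_const n a b (x y : {ffun 'I_k -> F}) :
  B (g (upd x n a)) - B (g (upd x n b)) = B (g (upd y n a)) - B (g (upd y n b)).
Proof.
move: x; apply: (@upd_ind _ _ y) => // x l v <-.
have [-> | ln] := eqVneq l n; first by rewrite !upd_upd.
have nl : n != l by rewrite eq_sym.
have := Bg_separable (upd x n b) nl a v; rewrite !upd_upd => sep.
rewrite !(upd_updC _ _ _ ln).
by rewrite -[B (g (upd (upd x n a) l v))](addrK (B (g (upd x n b)))) sep; ring.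
Qed.

Lemma separable_decomposition (x y : {ffun 'I_k -> F}) :
  B (g x) = B (g y) + \sum_(j < k) (B (g (upd y j (x j))) - B (g y)).
Proof.
move: x; apply: (@upd_ind _ _ y) => [|x n t IHx].
  by under eq_bigr => j _ do rewrite upd_idE // subrr; rewrite big1_eq addr0.
rewrite (bigD1 n) //= updE eqxx.
under eq_bigr => j jn do rewrite updE (negbTE jn).
move: IHx; rewrite (bigD1 n) //= => Bgx.
have := separable_diff_const n t (x n) x y; rewrite (@upd_idE _ _ x n (x n)) // => Bdiff.
by rewrite -(subrK (B (g x)) (B (g (upd x n t)))) Bdiff Bgx; ring.
Qed.

End Decomposition.

Section LinearTuple.
Variables (F : finFieldType) (r k : nat) (f : 'I_r -> hyper F k).
Hypothesis F_additive_linear : additive_maps_linear F.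
Hypotheses (one_lt_r : (1 < r)%N) (two_lt_k : (2 < k)%N).
Hypothesis f_latin : forall i, latin_hypercube (f i).
Hypothesis f_pairs : forall (i j : 'I_r), i != j ->
  forall (e : 'I_3 -> 'I_k), {homo e : s t / (s < t)%N} ->
  forall (x : {ffun 'I_k -> F}),
    linear_pair (restrict (f i) e x) (restrict (f j) e x).
Implicit Types (x y : {ffun 'I_k -> F}) (d : seq 'I_k).

Definition face_linear_pair (i i' : 'I_r) x d :=
  exists (be be' : {perm F}) (A : 'I_k -> F -> F) (a b : 'I_k -> F),
    face_form be (f i) x d (fun p w => a p * A p w) /\
    face_form be' (f i') x d (fun p w => b p * A p w).

Lemma restrict_face (h : hyper F k) n (e : 'I_n -> 'I_k) x z :
  on_face x (codom e) z -> restrict h e x [ffun s => z (e s)] = h z.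
Proof.
move=> xz; rewrite /restrict; congr h; apply/ffunP => p; rewrite ffunE.
case: pickP => [s /eqP <-|none]; first by rewrite ffunE.
by rewrite xz //; apply/codomP => -[s ps]; have := none s; rewrite ps eqxx.
Qed.

Lemma face_linear_pair_increasing i i' x (e : 'I_3 -> 'I_k) :
  i != i' -> {homo e : s t / (s < t)%N} -> face_linear_pair i i' x (codom e).
Proof.
move=> ii' e_inc.
have e_inj : injective e.
  move=> s t est; apply/eqP; apply: contraT; rewrite -val_eqE neq_ltn.
  by case/orP => /e_inc; rewrite est ltnn.
pose pos p := if [pick s | e s == p] is Some s then s else ord0.
have posK : cancel e pos.
  by move=> s; rewrite /pos; case: pickP => [s' /eqP/e_inj //|/(_ s)]; rewrite eqxx.
have [alpha [beta [a fa]]] := f_pairs ii' e_inc x.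
exists (beta ord0), (beta ord_max), (fun p => alpha (pos p)).
exists (fun p => a ord0 (pos p)), (fun p => a ord_max (pos p)).
split=> z xz.
- have := fa ord0 [ffun s => z (e s)]; rewrite /= restrict_face // => ->.
  rewrite codomE big_map big_enum /=; apply: eq_bigr => s _; by rewrite posK ffunE.
- have := fa ord_max [ffun s => z (e s)]; rewrite /= restrict_face // => ->.
  rewrite codomE big_map big_enum /=; apply: eq_bigr => s _; by rewrite posK ffunE.
Qed.

Lemma face_linear_pair_uniq i i' x (j l m : 'I_k) :
  i != i' -> uniq [:: j; l; m] -> face_linear_pair i i' x [:: j; l; m].
Proof.
move=> ii' jlm; have [e [e_inc e_perm]] := increasing_codom_perm j jlm.
have [be [be' [A [a [b [fa fb]]]]]] := face_linear_pair_increasing x ii' e_inc.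
by exists be, be', A, a, b; split; apply: face_form_perm e_perm _.
Qed.

Lemma f_face_additive i : face_additive (f i).
Proof.
have [i' i'i] := exists_notin (s := [:: i]) one_lt_r.
move=> x j l m jlm; rewrite inE eq_sym in i'i.
have [be [_ [A [a [_ [fa _]]]]]] := face_linear_pair_uniq x i'i jlm.
by exists be, (fun p w => a p * A p w).
Qed.

Lemma separable_cross_ratio i i' (B B' : F -> F) y j t t' :
  i != i' ->
  (forall x p s, p != s -> separable_at B (f i) x p s) ->
  (forall x p s, p != s -> separable_at B' (f i') x p s) ->
  (B (f i (upd y j t)) - B (f i y)) * (B' (f i' (upd y j t')) - B' (f i' y)) =
  (B (f i (upd y j t')) - B (f i y)) * (B' (f i' (upd y j t)) - B' (f i' y)).
Proof.
move=> ii' B_sep B'_sep; have [l [m jlm]] := exists_uniq3 j two_lt_k.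
have jl : j != l by move: jlm; rewrite uniq3 => /and3P[].
have [be [be' [A [a [b [fa fb]]]]]] := face_linear_pair_uniq y ii' jlm.
have [c Bdiff] := separable_axis_diff F_additive_linear (f_latin i) jlm (B_sep _ _ _ jl) fa.
have [c' B'diff] :=
  separable_axis_diff F_additive_linear (f_latin i') jlm (B'_sep _ _ _ jl) fb.
by rewrite !Bdiff !B'diff; ring.
Qed.

Lemma f_linear_tuple : linear_tuple f.
Proof.
pose y : {ffun 'I_k -> F} := [ffun => 0].
have [B B_spec] := fin_all_exists (fun i =>
  exists_separable_perm F_additive_linear (f_latin i) (f_face_additive i) two_lt_k y).
pose phi i j t := B i (f i (upd y j t)).
have phi0 i j : phi i j 0 = 0 by rewrite /phi upd_idE ?ffunE // (B_spec i).1.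
pose i0 : 'I_r := Ordinal (ltnW one_lt_r).
have phi_inj j : injective (phi i0 j).
  by move=> t t' /perm_inj; apply: (bij_inj (f_latin i0 y j)).
have phi1 j : phi i0 j 1 != 0 by rewrite -(phi0 i0 j) (inj_eq (phi_inj j)) oner_neq0.
have cross i j t : phi i j t * phi i0 j 1 = phi i j 1 * phi i0 j t.
  have [-> | ii0] := eqVneq i i0; first exact: mulrC.
  have := separable_cross_ratio y j t 1 ii0 (B_spec i).2 (B_spec i0).2.
  by rewrite !(B_spec _).1 !subr0.
exists (fun j => perm (phi_inj j)), B, (fun i j => phi i j 1 / phi i0 j 1) => i x.
rewrite (separable_decomposition (B_spec i).2 x y) (B_spec i).1 add0r.
by apply: eq_bigr => j _; rewrite permE subr0 mulrAC -cross mulfK.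
Qed.

End LinearTuple.

Theorem theorem3 (q : nat) (Hq : prime q) (r k : nat) (Hr : (2 <= r)%N) (Hk : (4 <= k)%N)
  (f : 'I_r -> hyper 'F_q k)
  (Hlatin : forall i, latin_hypercube (f i))
  (Hpairs : forall (i j : 'I_r), i != j ->
     forall (e : 'I_3 -> 'I_k), {homo e : s t / (s < t)%N} ->
     forall (x : {ffun 'I_k -> 'F_q}),
       linear_pair (restrict (f i) e x) (restrict (f j) e x)) :
  linear_tuple f.
Proof.
exact: f_linear_tuple (Fp_additive_maps_linear Hq) Hr (ltnW Hk) Hlatin Hpairs.
Qed.
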